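(* Let $n\ge 2$. Let $\Theta\subset\mathbb{R}^{n+\binom{n}{2}}$ be the set of all pairs $(\boldsymbol{\lambda},G)$, where $\boldsymbol{\lambda}=(\lambda_1,\dots,\lambda_n)$ consists of non-zero reals with $\lambda_p\ne\pm\lambda_q$ for $p\ne q$, and $G=(g_{pq})$ is a real symmetric $n\times n$ matrix with $g_{pp}=1$, such that the following hold for $G$ and the matrix $H=(h_{pq})$ defined by $h_{pp}=1$ and $h_{pq}=\frac{2\lambda_p(\lambda_pg_{pq}-\lambda_q)}{\lambda_p^2-\lambda_q^2}$ for $p\ne q$: (i) $G$ is non-degenerate indefinite with negative index of inertia $1$, and all principal minors of $G$ of sizes $2\times2,\dots,(n-1)\times(n-1)$ are strictly positive; (ii) $\sum_{q=1}^n\sum_{r=1}^ng^{qr}h_{pq}h_{pr}<0$ for $p=1,\dots,n$, where $(g^{qr})=G^{-1}$. Then $\Theta$ is non-empty.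
   Context: (By the paper's construction, points of $\Theta$ correspond to flexible cross-polytopes in Lobachevsky space $\Lambda^n$ of the simplest type, in which all tangents of half dihedral angles at one facet stay proportional.) *)

From HB Require Import structures.
From mathcomp Require Import all_boot all_order all_algebra.
From mathcomp Require Import reals.
Set Implicit Arguments. Unset Strict Implicit. Unset Printing Implicit Defensive.
Import Order.TTheory GRing.Theory Num.Theory.
Local Open Scope ring_scope.

(* Negative index of inertia of a symmetric matrix (Sylvester): the number of
   negative diagonal entries in a congruence diagonalization P^T G P. *)
Definition neg_inertia_index (R : realFieldType) (n : nat) (G : 'M[R]_n) (k : nat) : Prop :=
  exists (P : 'M[R]_n) (d : 'rV[R]_n),
    P \in unitmx /\ P^T *m G *m P = diag_mx d /\ #|[set i | d 0 i < 0]| = k.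

Definition nondegenerate (R : realFieldType) (n : nat) (G : 'M[R]_n) : Prop :=
  \det G != 0.

Definition indefinite (R : realFieldType) (n : nat) (G : 'M[R]_n) : Prop :=
  (exists x : 'rV[R]_n, 0 < (x *m G *m x^T) 0 0) /\
  (exists y : 'rV[R]_n, (y *m G *m y^T) 0 0 < 0).

Definition principal_submx (R : realFieldType) (n : nat) (G : 'M[R]_n)
  (S : {set 'I_n}) : 'M[R]_#|S| :=
  \matrix_(i < #|S|, j < #|S|) G (enum_val i) (enum_val j).

Definition principal_minor (R : realFieldType) (n : nat) (G : 'M[R]_n)
  (S : {set 'I_n}) : R := \det (principal_submx G S).

Definition Hmx (R : realFieldType) (n : nat) (lam : 'I_n -> R) (G : 'M[R]_n) : 'M[R]_n :=
  \matrix_(p, q) (if p == q then 1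
                  else 2 * lam p * (lam p * G p q - lam q) / (lam p ^+ 2 - lam q ^+ 2)).

Definition in_Theta (R : realFieldType) (n : nat) (lam : 'I_n -> R) (G : 'M[R]_n) : Prop :=
  (forall p, lam p != 0) /\
  (forall p q, p != q -> lam p != lam q /\ lam p != - lam q) /\
  G^T = G /\ (forall p, G p p = 1) /\
  (nondegenerate G /\ indefinite G /\ neg_inertia_index G 1 /\
   (forall S : {set 'I_n}, (2 <= #|S| <= n.-1)%N -> 0 < principal_minor G S)) /\
  (forall p, \sum_q \sum_r (invmx G) q r * Hmx lam G p q * Hmx lam G p r < 0).

From Pilot Require Import Defs.
From HB Require Import structures.
From mathcomp Require Import all_boot all_order all_algebra.
From mathcomp Require Import reals.
From mathcomp Require Import ring lra zify.
Import Order.TTheory GRing.Theory Num.Theory.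
Local Open Scope ring_scope.
Set Implicit Arguments. Unset Strict Implicit. Unset Printing Implicit Defensive.

(* Take for G the equicorrelation matrix (1 on the diagonal, a elsewhere) with
   a slightly below -1/(n-1), namely a = kappa (1 + (n-1) a) for kappa = 32 n^2.
   The pivots (1-a)(1+ka)/(1+(k-1)a) of its LDL^T decomposition are positive for
   k < n-1 and negative for k = n-1, which gives (i).  Since
   G^-1 = (1-a)^-1 (I - kappa J), condition (ii) for the row p reads
   1 - a + sum_q W_q^2 < kappa (sum_q W_q)^2, where W_q = h_pq - g_pq.
   Let the lambda_p grow geometrically with ratio kappa.  Then W_q is close to
   -a if lambda_q >> lambda_p and close to a if lambda_q << lambda_p, so
   sum_q W_q is close to a (2p + 1 - n), which is bounded away from 0 except
   for the middle row when n is odd.  Hence the two middle lambdas are given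
   the ratio 1 + 1/(40 n) instead: each of their rows then has one entry of
   size at least 20 n, which dominates the inequality. *)

Lemma sum_ord_ltn_const (V : zmodType) m k (x : V) : (k <= m)%N ->
  \sum_(l < m) (if (l < k)%N then x else 0) = x *+ k.
Proof.
move=> km; rewrite -big_mkcond /= -(big_ord_widen m (fun _ => x) km).
by rewrite sumr_const card_ord.
Qed.

Lemma sum_delta_mull (R : pzSemiRingType) m (j : 'I_m) (F : 'I_m -> R) :
  \sum_l (j == l)%:R * F l = F j.
Proof.
rewrite (bigD1 j) //= eqxx mul1r big1 ?addr0 // => l lj.
by rewrite eq_sym (negbTE lj) mul0r.
Qed.

Lemma ler_sum_const (R : numDomainType) n (F : 'I_n -> R) c :
  (forall q, F q <= c) -> \sum_q F q <= n%:R * c.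
Proof.
move=> Fc; apply: le_trans (ler_sum _ (fun q _ => Fc q)) _.
by rewrite sumr_const card_ord mulr_natl.
Qed.

Lemma ler_norm_sum_const (R : numDomainType) n (F : 'I_n -> R) c :
  (forall q, `|F q| <= c) -> `|\sum_q F q| <= n%:R * c.
Proof. by move=> Fc; apply: le_trans (ler_norm_sum _ _ _) (ler_sum_const Fc). Qed.

Section EquicorrMatrix.
Variable R : fieldType.

Definition equicorr_mx m (a : R) : 'M[R]_m :=
  \matrix_(i, j) (if i == j then 1 else a).

Lemma equicorr_mx_tr m a : (equicorr_mx m a)^T = equicorr_mx m a.
Proof. by apply/matrixP => i j; rewrite !mxE eq_sym. Qed.

Lemma sum_equicorr_mx_mull m a (p : 'I_m) (F : 'I_m -> R) :
  \sum_q equicorr_mx m a p q * F q = (1 - a) * F p + a * \sum_q F q.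
Proof.
rewrite -sum_delta_mull !mulr_sumr -big_split /=.
by apply: eq_bigr => q _; rewrite mxE; case: eqP => _ /=; ring.
Qed.

Definition ldl_coef (a : R) (k : nat) : R := - a / (1 + (k%:R - 1) * a).

Definition ldl_mx m (a : R) : 'M[R]_m :=
  \matrix_(j, k) (if j == k then 1 else if (j < k)%N then ldl_coef a k else 0).

Definition equicorr_pivot (a : R) (k : nat) : R :=
  (1 - a) * (1 + k%:R * a) / (1 + (k%:R - 1) * a).

Lemma det_ldl_mx m a : \det (ldl_mx m a) = 1.
Proof.
rewrite -det_tr det_trig; first by rewrite big1 // => i _; rewrite !mxE eqxx.
apply/forallP => i; apply/forallP => j; apply/implyP => ij; rewrite !mxE.
by rewrite -val_eqE gtn_eqF // ltnNge (ltnW ij).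
Qed.

Section LDL.
Variables (m : nat) (a : R).
Hypothesis a_denom : forall k : 'I_m, 1 + (k%:R - 1) * a != 0.

Lemma mul_equicorr_ldl_mxE (j k : 'I_m) :
  (equicorr_mx m a *m ldl_mx m a) j k =
    (1 - a) * ldl_mx m a j k + a * (1 + k%:R * ldl_coef a k).
Proof.
rewrite mxE sum_equicorr_mx_mull; congr (_ + a * _).
rewrite (eq_bigr (fun l => (k == l)%:R * 1 +
                         (if (l < k)%N then ldl_coef a k else 0))).
  by rewrite big_split /= sum_delta_mull sum_ord_ltn_const 1?ltnW // mulr_natl.
move=> l _; rewrite mxE eq_sym; case: eqP => [->|_] /=; first by rewrite ltnn; ring.
by rewrite mul0r add0r.
Qed.

Lemma mul_equicorr_ldl_mx_upper (j k : 'I_m) : (j < k)%N ->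
  (equicorr_mx m a *m ldl_mx m a) j k = 0.
Proof.
move=> jk; rewrite mul_equicorr_ldl_mxE mxE -val_eqE ltn_eqF // jk /ldl_coef.
by field; apply: a_denom.
Qed.

Lemma mul_equicorr_ldl_mx_diag (k : 'I_m) :
  (equicorr_mx m a *m ldl_mx m a) k k = equicorr_pivot a k.
Proof.
rewrite mul_equicorr_ldl_mxE mxE eqxx /ldl_coef /equicorr_pivot.
by field; apply: a_denom.
Qed.

Lemma ldl_equicorr_le (i k : 'I_m) : (i <= k)%N ->
  ((ldl_mx m a)^T *m equicorr_mx m a *m ldl_mx m a) i k =
    if i == k then equicorr_pivot a k else 0.
Proof.
move=> ik; rewrite -mulmxA mxE (bigD1 i) //= big1 => [|j ji].
  rewrite [_^T i i]mxE [ldl_mx m a i i]mxE eqxx mul1r addr0.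
  case: eqP => [->|ik']; first exact: mul_equicorr_ldl_mx_diag.
  by apply: mul_equicorr_ldl_mx_upper; rewrite ltn_neqAle ik andbT; apply/eqP => /val_inj.
rewrite [_^T i j]mxE [ldl_mx m a j i]mxE; case: (ltngtP j i) => ij.
- by rewrite mul_equicorr_ldl_mx_upper ?mulr0 // (leq_trans ij).
- by rewrite -val_eqE gtn_eqF //= mul0r.
- by rewrite (val_inj ij) eqxx in ji.
Qed.

Lemma ldl_equicorr :
  (ldl_mx m a)^T *m equicorr_mx m a *m ldl_mx m a = diag_mx (\row_k equicorr_pivot a k).
Proof.
have sym : ((ldl_mx m a)^T *m equicorr_mx m a *m ldl_mx m a)^T =
    (ldl_mx m a)^T *m equicorr_mx m a *m ldl_mx m a.
  by rewrite !trmx_mul trmxK equicorr_mx_tr mulmxA.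
apply/matrixP => i k; rewrite [RHS]mxE [in RHS]mxE; case: (leqP i k) => ik.
  by rewrite ldl_equicorr_le //; case: eqP => // ->; rewrite mulr1n.
rewrite -sym mxE ldl_equicorr_le ?(ltnW ik) // -!val_eqE /= ltn_eqF //.
by rewrite gtn_eqF.
Qed.

Lemma det_equicorr_mx : \det (equicorr_mx m a) = \prod_(k < m) equicorr_pivot a k.
Proof.
have := congr1 determinant ldl_equicorr.
rewrite !det_mulmx det_tr det_ldl_mx mul1r mulr1 det_diag => ->.
by apply: eq_bigr => k _; rewrite mxE.
Qed.

End LDL.
End EquicorrMatrix.

Lemma row_mul_col (R : pzSemiRingType) m n p (A : 'M[R]_(m, n)) (B : 'M[R]_(n, p)) i j :
  (row i A *m col j B) 0 0 = (A *m B) i j.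
Proof. by rewrite !mxE; apply: eq_bigr => k _; rewrite !mxE. Qed.

Lemma congr_diag_quad_row (R : comPzRingType) n (G P : 'M[R]_n) d i :
  P^T *m G *m P = diag_mx d -> (row i P^T *m G *m (row i P^T)^T) 0 0 = d 0 i.
Proof.
move=> PGP; rewrite -row_mul tr_row trmxK row_mul_col PGP mxE eqxx.
by rewrite mulr1n.
Qed.

Lemma principal_submx_equicorr (R : realFieldType) n (a : R) (S : {set 'I_n}) :
  principal_submx (equicorr_mx n a) S = equicorr_mx #|S| a.
Proof. by apply/matrixP => i j; rewrite !mxE (inj_eq enum_val_inj). Qed.

Section EquicorrSignature.
Variables (R : realFieldType) (n : nat) (a : R).
Hypotheses (n_ge2 : (2 <= n)%N) (a_minor : 0 < 1 + (n%:R - 2) * a)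
  (a_det : 1 + (n%:R - 1) * a < 0).

Let N_ge2 : 2 <= n%:R :> R. Proof. by rewrite (ler_nat R 2 n). Qed.

Let a_lt0 : a < 0. Proof. have := N_ge2; move: (n%:R : R) a_det => N ?; nra. Qed.

Let natr_predn : n.-1%:R = n%:R - 1 :> R.
Proof. by rewrite -subn1 natrB // ltnW. Qed.

Let denom_gt0 k : (k <= n.-1)%N -> 0 < 1 + (k%:R - 1) * a.
Proof.
move=> kn; have : k%:R <= n%:R - 1 :> R by rewrite -natr_predn ler_nat.
by have := a_lt0; move: (k%:R : R) (n%:R : R) a_minor => K N; nra.
Qed.

Let denom_neq0 m (k : 'I_m) : (m <= n)%N -> 1 + (k%:R - 1) * a != 0.
Proof. by move=> mn; rewrite gt_eqF // denom_gt0 //; have := ltn_ord k; lia. Qed.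

Let pivot_gt0 k : (k < n.-1)%N -> 0 < equicorr_pivot a k.
Proof.
move=> kn; have := denom_gt0 (ltnW kn).
have : k%:R <= n%:R - 2 :> R by rewrite -(natrB _ n_ge2) ler_nat; lia.
rewrite /equicorr_pivot; have := a_lt0.
move: (k%:R : R) (n%:R : R) a_minor => K N hm ha hK hd.
by apply: divr_gt0 => //; apply: mulr_gt0; nra.
Qed.

Let pivot_lt0 : equicorr_pivot a n.-1 < 0.
Proof.
have := denom_gt0 (leqnn _); rewrite /equicorr_pivot natr_predn.
have := a_lt0; move: (n%:R : R) a_minor a_det => N hm hd ha hD.
by rewrite pmulr_llt0 ?invr_gt0 // pmulr_rlt0 //; lra.
Qed.

Let pivot_neq0 (k : 'I_n) : equicorr_pivot a k != 0.
Proof.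
case: (ltnP k n.-1) => kn; first by rewrite gt_eqF ?pivot_gt0.
have -> : (k : nat) = n.-1 by have := ltn_ord k; lia.
by rewrite lt_eqF // pivot_lt0.
Qed.

Let predn_lt : (n.-1 < n)%N. Proof. by rewrite ltn_predL ltnW. Qed.

Let last_ord : 'I_n := Ordinal predn_lt.

Let pivot_lt0E (k : 'I_n) : (equicorr_pivot a k < 0) = (k == last_ord).
Proof.
case: (ltnP k n.-1) => kn.
  by rewrite lt_gtF ?pivot_gt0 // -val_eqE /= ltn_eqF.
have -> : k = last_ord by apply: val_inj => /=; have := ltn_ord k; lia.
by rewrite eqxx pivot_lt0.
Qed.

Lemma equicorr_nondegenerate : Defs.nondegenerate (equicorr_mx n a).
Proof.
rewrite /Defs.nondegenerate det_equicorr_mx => [|k]; last exact: denom_neq0.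
by apply/prodf_neq0 => k _; apply: pivot_neq0.
Qed.

Lemma equicorr_principal_minor_gt0 (S : {set 'I_n}) :
  (#|S| <= n.-1)%N -> 0 < principal_minor (equicorr_mx n a) S.
Proof.
move=> Sn; rewrite /principal_minor principal_submx_equicorr det_equicorr_mx => [|k].
  by apply: prodr_gt0 => k _; apply: pivot_gt0; apply: leq_trans (ltn_ord k) Sn.
by apply: denom_neq0; rewrite -[X in (_ <= X)%N](card_ord n) max_card.
Qed.

Lemma equicorr_neg_inertia : neg_inertia_index (equicorr_mx n a) 1.
Proof.
exists (ldl_mx n a), (\row_k equicorr_pivot a k).
split; first by rewrite unitmxE det_ldl_mx unitr1.
split; first by apply: ldl_equicorr => k; apply: denom_neq0.
have -> : [set i | (\row_k equicorr_pivot a k) 0 i < 0] = [set last_ord].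
  by apply/setP => i; rewrite !inE mxE pivot_lt0E.
exact: cards1.
Qed.

Lemma equicorr_indefinite : indefinite (equicorr_mx n a).
Proof.
have LDL := ldl_equicorr (fun k : 'I_n => denom_neq0 k (leqnn n)).
split.
  exists (row (Ordinal (ltnW n_ge2)) (ldl_mx n a)^T).
  by rewrite (congr_diag_quad_row _ LDL) mxE pivot_gt0 //=; lia.
exists (row last_ord (ldl_mx n a)^T).
by rewrite (congr_diag_quad_row _ LDL) mxE pivot_lt0.
Qed.

End EquicorrSignature.

Section EquicorrInverse.
Variables (R : fieldType) (n : nat) (a K : R).
Hypotheses (a_neq1 : a != 1) (a_fix : a = K * (1 + (n%:R - 1) * a)).

Lemma mul_equicorr_inv :
  equicorr_mx n a *m ((1 - a)^-1 *: (1%:M - const_mx K)) = 1%:M.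
Proof.
have a1 : 1 - a != 0 by rewrite subr_eq0 eq_sym.
apply/matrixP => i j; rewrite [LHS]mxE sum_equicorr_mx_mull.
have -> : \sum_l ((1 - a)^-1 *: (1%:M - const_mx K) : 'M_n) l j =
    (1 - a)^-1 * (1 - K * n%:R).
  rewrite (eq_bigr (fun l => (1 - a)^-1 * ((l == j)%:R - K))) => [|l _]; last by rewrite !mxE.
  rewrite -mulr_sumr sumrB sumr_const card_ord mulr_natr; congr (_ * (_ - _)).
  by rewrite (bigD1 j) //= eqxx big1 ?addr0 // => l /negbTE ->.
rewrite !mxE; set d := (i == j)%:R.
have -> : (1 - a) * ((1 - a)^-1 * (d - K)) + a * ((1 - a)^-1 * (1 - K * n%:R)) =
    d + (1 - a)^-1 * (a - K * (1 + (n%:R - 1) * a)) by field.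
by rewrite -a_fix subrr mulr0 addr0.
Qed.

Lemma invmx_equicorr : invmx (equicorr_mx n a) = (1 - a)^-1 *: (1%:M - const_mx K).
Proof.
have [u _] := mulmx1_unit mul_equicorr_inv.
by rewrite -[invmx _]mulmx1 -{1}mul_equicorr_inv mulKmx.
Qed.

Lemma quad_invmx_equicorr (h : 'I_n -> R) :
  \sum_q \sum_r invmx (equicorr_mx n a) q r * h q * h r =
    (1 - a)^-1 * (\sum_q h q ^+ 2 - K * (\sum_q h q) ^+ 2).
Proof.
have -> : (1 - a)^-1 * (\sum_q h q ^+ 2 - K * (\sum_q h q) ^+ 2) =
    \sum_q ((1 - a)^-1 * h q ^+ 2 - (1 - a)^-1 * K * h q * \sum_r h r).
  by rewrite sumrB -mulr_suml -!mulr_sumr; ring.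
rewrite invmx_equicorr; apply: eq_bigr => q _.
rewrite (eq_bigr (fun r => (1 - a)^-1 * h q * ((q == r)%:R * h r) -
                           (1 - a)^-1 * K * h q * h r)) => [|r _]; last first.
  by rewrite !mxE; ring.
by rewrite sumrB -!mulr_sumr sum_delta_mull; ring.
Qed.

Lemma quad_invmx_equicorr_row (p : 'I_n) (h : 'I_n -> R) : h p = 1 ->
  \sum_q \sum_r invmx (equicorr_mx n a) q r * h q * h r =
    (1 - a)^-1 * (1 - a + \sum_q (h q - equicorr_mx n a p q) ^+ 2
                 - K * (\sum_q (h q - equicorr_mx n a p q)) ^+ 2).
Proof.
move=> hp; rewrite quad_invmx_equicorr; congr (_ * _).
set W := fun q => h q - equicorr_mx n a p q.
have hW q : h q = equicorr_mx n a p q + W q by rewrite /W addrC subrK.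
have Wp : W p = 0 by rewrite /W hp mxE eqxx subrr.
have sum_g : \sum_q equicorr_mx n a p q = 1 + (n%:R - 1) * a.
  rewrite -(eq_bigr _ (fun q _ => mulr1 _)) sum_equicorr_mx_mull sumr_const card_ord.
  by rewrite -mulr_natr; ring.
have -> : \sum_q h q ^+ 2 = \sum_q equicorr_mx n a p q * (equicorr_mx n a p q + 2 * W q) +
                            \sum_q W q ^+ 2.
  rewrite -big_split; apply: eq_bigr => q _ /=; rewrite hW.
  by move: (equicorr_mx n a p q) (W q) => x y; ring.
have -> : \sum_q h q = 1 + (n%:R - 1) * a + \sum_q W q.
  by rewrite (eq_bigr _ (fun q _ => hW q)) big_split /= sum_g.
rewrite sum_equicorr_mx_mull big_split /= -mulr_sumr sum_g Wp mxE eqxx.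
set s := 1 + (n%:R - 1) * a; set S := \sum_q W q; set Q := \sum_q W q ^+ 2.
apply/eqP; rewrite -subr_eq0; apply/eqP.
transitivity ((a - K * s) * (s + 2 * S)); first by rewrite /s; ring.
by rewrite -a_fix subrr mul0r.
Qed.

End EquicorrInverse.

Section Correlation.
Variables (R : realFieldType) (N : R).
Hypothesis N_ge2 : 2 <= N.

Definition kappa : R := 32 * N ^+ 2.

Definition corr : R := - kappa / (kappa * (N - 1) - 1).

Let kappa_ge : 128 <= kappa. Proof. by have := N_ge2; rewrite /kappa; nra. Qed.

Let denom_gt0 : 0 < kappa * (N - 1) - 1.
Proof. by have := N_ge2; have := kappa_ge; nra. Qed.

Let corr_mulD : corr * (kappa * (N - 1) - 1) = - kappa.
Proof. by rewrite /corr divfK // gt_eqF. Qed.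

Let corr_facts := (N_ge2, kappa_ge, denom_gt0, corr_mulD).

Lemma corr_fix : corr = kappa * (1 + (N - 1) * corr).
Proof. by have := corr_mulD; move: corr kappa => a k; nra. Qed.

Lemma corr_lt0 : corr < 0.
Proof. by have := corr_facts; move: corr kappa => a k [[[hN hk] hD] e]; nra. Qed.

Lemma corr_ge : -2 <= corr.
Proof. by have := corr_facts; move: corr kappa => a k [[[hN hk] hD] e]; nra. Qed.

Lemma corr_mulN : corr * N <= -1.
Proof. by have := corr_facts; move: corr kappa => a k [[[hN hk] hD] e]; nra. Qed.

Lemma corr_minor : 0 < 1 + (N - 2) * corr.
Proof. by have := corr_facts; move: corr kappa => a k [[[hN hk] hD] e]; nra. Qed.

Lemma corr_det : 1 + (N - 1) * corr < 0.
Proof. by have := corr_facts; move: corr kappa => a k [[[hN hk] hD] e]; nra. Qed.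

End Correlation.

Section Deviation.
Variable R : realFieldType.
Implicit Types a mu T : R.

(* [hdev a (lam q / lam p)] is the entry [h_pq - g_pq] for [g_pq = a]. *)
Definition hdev a mu : R := (a * (1 + mu ^+ 2) - 2 * mu) / (1 - mu ^+ 2).

Lemma Hmx_sub_hdev a x y : x != 0 -> x ^+ 2 != y ^+ 2 ->
  2 * x * (x * a - y) / (x ^+ 2 - y ^+ 2) - a = hdev a (y / x).
Proof. by move=> x0 xy; rewrite /hdev; field; rewrite x0 subr_eq0 xy. Qed.

Lemma hdevV a mu : mu != 0 -> mu ^+ 2 != 1 -> hdev a mu^-1 = - hdev a mu.
Proof.
move=> mu0 mu1; rewrite /hdev; field.
by rewrite subr_eq0 eq_sym mu1 mu0 subr_eq0 mu1.
Qed.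

Lemma hdev_far a mu T : `|a| <= 2 -> 4 <= T -> T <= `|mu| ->
  `|hdev a mu + a| <= 8 / T.
Proof.
move=> ha hT hm.
have hm2 : mu ^+ 2 = `|mu| ^+ 2 by rewrite real_normK ?num_real.
have hd : 0 < mu ^+ 2 - 1 by rewrite hm2; nra.
have -> : hdev a mu + a = 2 * (mu - a) / (mu ^+ 2 - 1).
  by rewrite /hdev; field; rewrite gt_eqF // -opprB oppr_eq0 gt_eqF.
rewrite normrM [`|_^-1|]ger0_norm; last by rewrite invr_ge0 ltW.
rewrite ler_pdivrMr // mulrAC ler_pdivlMr; last lra.
have : `|2 * (mu - a)| <= 2 * (`|mu| + 2).
  rewrite normrM ger0_norm // ler_pM2l //; apply: (le_trans (ler_normB _ _)); lra.
by have : 0 <= `|2 * (mu - a)| by []; nra.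
Qed.

Lemma hdev_near a mu T : `|a| <= 2 -> 4 <= T -> mu != 0 -> `|mu| <= T^-1 ->
  `|hdev a mu - a| <= 8 / T.
Proof.
move=> ha hT mu0 hm.
have hmV : T <= `|mu^-1|.
  by rewrite normfV -[T]invrK lef_pV2 ?posrE ?normr_gt0 ?invr_gt0 //; lra.
have mu1 : mu ^+ 2 != 1.
  have m1 : `|mu| < 1 by apply: (le_lt_trans hm); rewrite invf_lt1; lra.
  rewrite -real_normK ?num_real // lt_eqF //; have := normr_ge0 mu; nra.
by rewrite -normrN opprD opprK -hdevV //; apply: hdev_far.
Qed.

Lemma hdev_pair a e : a < 0 -> 0 < e -> e <= 1 -> 2 <= hdev a (1 + e) * (3 * e).
Proof.
move=> a0 e0 e1.
have d0 : 0 < 2 * e + e ^+ 2 by nra.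
have d : 1 - (1 + e) ^+ 2 = - (2 * e + e ^+ 2) by ring.
have : hdev a (1 + e) * (2 * e + e ^+ 2) = 2 * (1 + e) - a * (1 + (1 + e) ^+ 2).
  by rewrite /hdev d; field; rewrite gt_eqF.
by move: (hdev a _) => M hM; nra.
Qed.
End Deviation.

Definition mid n : nat := (n.-1 %/ 2)%N.

Definition lam_rank n p : nat := if (p <= mid n)%N then p else p.-1.

Lemma lam_rank_lt n p q : (p < q)%N -> ~~ ((p == mid n) && (q == (mid n).+1)) ->
  (lam_rank n p < lam_rank n q)%N.
Proof.
rewrite /lam_rank; move: (mid n) => m pq.
by case: ifP; case: ifP; case: eqP; case: eqP; lia.
Qed.

Lemma mid_succ_lt n : (2 <= n)%N -> ((mid n).+1 < n)%N.
Proof. rewrite /mid; lia. Qed.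

Section Lambda.
Variables (R : realFieldType) (n : nat).
Hypothesis n_ge2 : (2 <= n)%N.

Definition lam_eps : R := (40 * n%:R)^-1.

Definition lam_factor p : R := if p == (mid n).+1 then 1 + lam_eps else 1.

Definition lamseq (p : 'I_n) : R := kappa (n%:R : R) ^+ lam_rank n p * lam_factor p.

Let N_ge2 : 2 <= n%:R :> R. Proof. by rewrite (ler_nat R 2 n). Qed.

Let lam_eps_gt0 : 0 < lam_eps.
Proof. by rewrite invr_gt0; have := N_ge2; lra. Qed.

Let lam_eps_le1 : lam_eps <= 1.
Proof. by rewrite invf_le1; have := N_ge2; lra. Qed.

Let lam_factor_ge1 p : 1 <= lam_factor p.
Proof. by rewrite /lam_factor; case: eqP; have := lam_eps_gt0; lra. Qed.

Let lam_factor_le2 p : lam_factor p <= 2.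
Proof. by rewrite /lam_factor; case: eqP; have := lam_eps_le1; lra. Qed.

Let kappa_gt1 : 1 < kappa (n%:R : R).
Proof. by rewrite /kappa; have := N_ge2; nra. Qed.

Lemma lamseq_gt0 (p : 'I_n) : 0 < lamseq p.
Proof.
apply: mulr_gt0; first by apply: exprn_gt0; have := kappa_gt1; lra.
by have := lam_factor_ge1 p; lra.
Qed.

Lemma lamseq_ratio_ge (p q : 'I_n) : (lam_rank n p < lam_rank n q)%N ->
  16 * n%:R ^+ 2 <= lamseq q / lamseq p.
Proof.
move=> pq; rewrite ler_pdivlMr ?lamseq_gt0 // /lamseq -(subnKC (ltnW pq)) exprD.
set X := _ ^+ lam_rank n p; set Y := _ ^+ (_ - _).
have X0 : 0 < X by apply: exprn_gt0; have := kappa_gt1; lra.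
have kY : kappa (n%:R : R) <= Y by apply: ler_eXnr; rewrite ?subn_gt0 // ltW.
have : 16 * n%:R ^+ 2 * lam_factor p <= Y * lam_factor q.
  have := lam_factor_ge1 q; have := lam_factor_le2 p; move: kY; rewrite /kappa.
  by move: (n%:R : R) (lam_factor p) (lam_factor q) => N fp fq; nra.
by move=> h; rewrite -mulrA [_ * (X * _)]mulrCA ler_pM2l.
Qed.

Lemma lamseq_ratio_le (p q : 'I_n) : (lam_rank n q < lam_rank n p)%N ->
  lamseq q / lamseq p <= (16 * n%:R ^+ 2)^-1.
Proof.
move=> qp; rewrite -invf_div lef_pV2 ?posrE ?divr_gt0 ?lamseq_gt0 //.
  exact: lamseq_ratio_ge.
by have := N_ge2; nra.
Qed.

Lemma lamseq_ratio_mid (p q : 'I_n) : (p : nat) = mid n -> (q : nat) = (mid n).+1 ->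
  lamseq q / lamseq p = 1 + lam_eps.
Proof.
rewrite /lamseq /lam_rank /lam_factor => -> ->; rewrite leqnn ltnn eqxx.
rewrite (ltn_eqF (ltnSn _)) mulr1 mulrAC divff ?mul1r //.
by rewrite expf_neq0 // gt_eqF // (lt_trans ltr01).
Qed.

Lemma lamseq_lt (p q : 'I_n) : (p < q)%N -> lamseq p < lamseq q.
Proof.
move=> pq; suff : 1 < lamseq q / lamseq p by rewrite ltr_pdivlMr ?lamseq_gt0 // mul1r.
case: (boolP ((p == mid n :> nat) && (q == (mid n).+1 :> nat))) => [/andP [/eqP ep /eqP eq]|hh].
  by rewrite (lamseq_ratio_mid ep eq); have := lam_eps_gt0; lra.
by have := lamseq_ratio_ge (lam_rank_lt pq hh); have := N_ge2; nra.
Qed.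

Lemma lamseq_separated (p q : 'I_n) : p != q ->
  lamseq p != lamseq q /\ lamseq p != - lamseq q.
Proof.
move=> pq; split; last by rewrite gt_eqF // (lt_trans _ (lamseq_gt0 p)) // oppr_lt0 lamseq_gt0.
case: (ltngtP p q) => [/lamseq_lt/lt_eqF -> //|/lamseq_lt/gt_eqF -> //|/val_inj/eqP].
by rewrite (negbTE pq).
Qed.

Lemma hdev_lam_eps (a : R) : a < 0 -> 20 * n%:R <= hdev a (1 + lam_eps).
Proof.
move=> a0; have := hdev_pair a0 lam_eps_gt0 lam_eps_le1.
have : lam_eps * (40 * n%:R) = 1 by rewrite mulVf // gt_eqF //; have := N_ge2; lra.
by have := lam_eps_gt0; move: (hdev a (1 + lam_eps)) lam_eps (n%:R : R) => M e N e0 e1 hM; nra.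
Qed.

End Lambda.

Definition step_row (R : zmodType) n (a : R) (p q : 'I_n) : R :=
  (if (q < p)%N then a else 0) - (if (p < q)%N then a else 0).

Lemma sum_step_row (R : comPzRingType) n (a : R) (p : 'I_n) :
  \sum_q step_row a p q = a * (2 * p%:R + 1 - n%:R).
Proof.
have gtp : \sum_(q < n) (if (p < q)%N then a else 0) = a *+ n - a *+ p.+1.
  rewrite -(sum_ord_ltn_const a (ltn_ord p)).
  have -> : a *+ n = \sum_(q < n) a by rewrite sumr_const card_ord.
  by rewrite -sumrB; apply: eq_bigr => q _; rewrite ltnS; case: leqP; rewrite ?subrr ?subr0.
rewrite /step_row sumrB (sum_ord_ltn_const a (ltnW (ltn_ord p))) gtp.
rewrite -[a *+ n]mulr_natr -[a *+ p]mulr_natr -[a *+ p.+1]mulr_natr -addn1 natrD.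
ring.
Qed.

Lemma row_form_spread_ineq (R : realFieldType) (a N x Q : R) :
  2 <= N -> -2 <= a -> a * N <= -1 -> - a / 2 <= x -> Q <= N * (4 * a ^+ 2) ->
  1 - a + Q - 32 * N ^+ 2 * x ^+ 2 < 0.
Proof.
move=> hN ha haN hx hQ.
have h1 : 1 <= (a * N) ^+ 2 by nra.
have a0 : a < 0 by nra.
have hx' : 0 <= x - a / 2 by lra.
have h2 : a ^+ 2 <= 4 * x ^+ 2 by nra.
have hN2 : 0 <= N ^+ 2 by nra.
have h3 : 8 * (a * N) ^+ 2 <= 32 * N ^+ 2 * x ^+ 2 by nra.
have ha2N : 0 <= a ^+ 2 * N by nra.
have h4 : 2 * (N * (4 * a ^+ 2)) <= 4 * (a * N) ^+ 2 by nra.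
nra.
Qed.

Lemma row_form_peak_ineq (R : realFieldType) (a N x Q M : R) :
  2 <= N -> -2 <= a -> 20 * N <= M -> M - 3 * N <= x -> Q <= M ^+ 2 + 9 * N ->
  1 - a + Q - 32 * N ^+ 2 * x ^+ 2 < 0.
Proof.
move=> hN ha hM hx hQ.
have hx2 : (M - 3 * N) ^+ 2 <= x ^+ 2 by nra.
have h0 : 0 <= x ^+ 2 by nra.
have hk : 0 <= 32 * N ^+ 2 - 2 by nra.
have h3 : 2 * (M - 3 * N) ^+ 2 <= 32 * N ^+ 2 * x ^+ 2.
  by have := mulr_ge0 hk h0; nra.
nra.
Qed.

Section RowForm.
Variables (R : realFieldType) (n : nat) (a : R).
Hypotheses (N_ge2 : 2 <= n%:R :> R) (a_ge : -2 <= a) (aN : a * n%:R <= -1).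

Definition row_form (W : 'I_n -> R) : R :=
  1 - a + \sum_q W q ^+ 2 - kappa (n%:R : R) * (\sum_q W q) ^+ 2.

Let abs_sqr (x : R) : x ^+ 2 = `|x| ^+ 2. Proof. by rewrite real_normK ?num_real. Qed.

Let a_lt0 : a < 0. Proof. by have := aN; have := N_ge2; nra. Qed.

Lemma row_form_lt0_spread (W : 'I_n -> R) (p : 'I_n) (eta : R) :
  (forall q, `|W q - step_row a p q| <= eta) -> n%:R * eta <= `|a| / 2 ->
  1 <= `|2 * p%:R + 1 - n%:R : R| -> row_form W < 0.
Proof.
move=> Ws eta_small p_off.
have eta_ge0 : 0 <= eta by apply: le_trans (normr_ge0 _) (Ws p).
have s_le q : `|step_row a p q| <= `|a|.
  by rewrite /step_row; case: ltngtP; rewrite ?subr0 ?sub0r ?normrN ?subrr ?normr0.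
have S_ge : `|a| / 2 <= `|\sum_q W q|.
  have : `|\sum_q step_row a p q - \sum_q W q| <= n%:R * eta.
    by rewrite distrC -sumrB; apply: ler_norm_sum_const.
  have : `|a| <= `|\sum_q step_row a p q|.
    by rewrite sum_step_row normrM ler_peMr.
  have := ler_normD (\sum_q step_row a p q - \sum_q W q) (\sum_q W q).
  by rewrite subrK; lra.
have Q_le : \sum_q W q ^+ 2 <= n%:R * (4 * a ^+ 2).
  apply: ler_sum_const => q; rewrite abs_sqr [a ^+ 2]abs_sqr.
  have : `|W q| <= 2 * `|a|.
    have := ler_normD (W q - step_row a p q) (step_row a p q); rewrite subrK.
    have := Ws q; have := s_le q; have : eta <= `|a| by have := N_ge2; nra.
    lra.
  by have := normr_ge0 (W q); move: `|W q| `|a| => x y; nra.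
rewrite /row_form /kappa [(\sum_q W q) ^+ 2]abs_sqr.
by apply: row_form_spread_ineq => //; rewrite -(ltr0_norm a_lt0).
Qed.

Lemma row_form_lt0_peak (W : 'I_n -> R) (q0 : 'I_n) (M : R) :
  (forall q, q != q0 -> `|W q| <= 3) -> `|W q0| = M -> 20 * n%:R <= M ->
  row_form W < 0.
Proof.
move=> W_le WM M_ge; rewrite /row_form /kappa [(\sum_q W q) ^+ 2]abs_sqr.
apply: (row_form_peak_ineq (M := M)) => //.
  rewrite (bigD1 q0) //=.
  have : `|\sum_(q | q != q0) W q| <= n%:R * 3.
    rewrite big_mkcond /=; apply: ler_norm_sum_const => q.
    by case: ifP => [/W_le //|_]; rewrite normr0.
  have := ler_normD (W q0 + \sum_(q | q != q0) W q) (- \sum_(q | q != q0) W q).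
  by rewrite addrK normrN WM; lra.
rewrite (bigD1 q0) //= abs_sqr WM lerD2l big_mkcond /=.
rewrite mulrC; apply: ler_sum_const => q; case: ifP => [/W_le Wq|_]; last by lra.
by rewrite abs_sqr; have := normr_ge0 (W q); nra.
Qed.

End RowForm.

Section WitnessRows.
Variables (R : realFieldType) (n : nat) (a : R).
Hypotheses (n_ge2 : (2 <= n)%N) (a_ge : -2 <= a) (a_mulN : a * n%:R <= -1).
Implicit Types p q : 'I_n.

Let N_ge2 : 2 <= n%:R :> R. Proof. by rewrite (ler_nat R 2 n). Qed.

Let a_lt0 : a < 0. Proof. by have := a_mulN; have := N_ge2; move: (n%:R : R) => N; nra. Qed.

Let lam := @lamseq R n.
Let W (p q : 'I_n) : R := Hmx lam (equicorr_mx n a) p q - equicorr_mx n a p q.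

Let a_abs : `|a| <= 2.
Proof. by rewrite ler0_norm ?(ltW a_lt0) //; have := a_ge; lra. Qed.

Let T_ge64 : 64 <= 16 * n%:R ^+ 2 :> R.
Proof. by have := N_ge2; move: (n%:R : R) => N; nra. Qed.

Let W_diag p : W p p = 0. Proof. by rewrite /W !mxE eqxx subrr. Qed.

Let W_hdev p q : p != q -> W p q = hdev a (lam q / lam p).
Proof.
move=> pq; have lp := lamseq_gt0 R n_ge2 p.
rewrite /W !mxE (negbTE pq) Hmx_sub_hdev ?(lt0r_neq0 lp) //.
by rewrite eqf_sqr negb_or; have [-> ->] := lamseq_separated R n_ge2 pq.
Qed.

Let T_ge4 : 4 <= 16 * n%:R ^+ 2 :> R.
Proof. by have := T_ge64; lra. Qed.

Let ratio_gt0 p q : 0 < lam q / lam p.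
Proof. by rewrite divr_gt0 ?lamseq_gt0. Qed.

Let W_far p q : (lam_rank n p < lam_rank n q)%N ->
  `|W p q + a| <= 8 / (16 * n%:R ^+ 2).
Proof.
move=> pq; rewrite W_hdev; last by apply: contraTneq pq => ->; rewrite ltnn.
apply: hdev_far => //; rewrite gtr0_norm //; exact: lamseq_ratio_ge.
Qed.

Let W_near p q : (lam_rank n q < lam_rank n p)%N ->
  `|W p q - a| <= 8 / (16 * n%:R ^+ 2).
Proof.
move=> qp; rewrite W_hdev; last by apply: contraTneq qp => ->; rewrite ltnn.
apply: hdev_near => //; first exact: lt0r_neq0.
by rewrite gtr0_norm //; exact: lamseq_ratio_le.
Qed.

Let eta_le1 : 8 / (16 * n%:R ^+ 2) <= 1 :> R.
Proof. by have := T_ge64; move: (16 * _) => T T64; rewrite ler_pdivrMr; lra. Qed.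

Let W_le3 p q : lam_rank n p != lam_rank n q -> `|W p q| <= 3.
Proof.
case: ltngtP => // [pq|qp] _.
  have := ler_normD (W p q + a) (- a); rewrite addrK normrN.
  by have := W_far pq; have := eta_le1; have := a_abs; lra.
have := ler_normD (W p q - a) a; rewrite subrK.
by have := W_near qp; have := eta_le1; have := a_abs; lra.
Qed.

Let row_form_lt0_off_mid p : (p : nat) != mid n -> (p : nat) != (mid n).+1 ->
  row_form a (W p) < 0.
Proof.
move=> pm pm1; apply: (row_form_lt0_spread N_ge2 a_ge a_mulN (p := p) (eta := 8 / (16 * n%:R ^+ 2))).
- move=> q; rewrite /step_row; case: (ltngtP q p) => [qp|pq|/val_inj ->] /=.
  + by rewrite subr0; apply: W_near; apply: lam_rank_lt => //; rewrite negb_and pm1 orbT.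
  + by rewrite sub0r opprK; apply: W_far; apply: lam_rank_lt => //; rewrite negb_and pm.
  + rewrite W_diag subrr subr0 normr0; have := T_ge4; move: (16 * _) => T hT.
    by rewrite divr_ge0 //; lra.
- rewrite ler0_norm ?(ltW a_lt0) //; have := a_mulN; have := N_ge2; move: (n%:R : R) => N hN haN.
  have -> : N * (8 / (16 * N ^+ 2)) = 1 / (2 * N) by field; lra.
  by rewrite ler_pdivrMr; nra.
- have [hp|hp] : (2 * p + 2 <= n)%N \/ (n <= 2 * p)%N.
    by move: pm pm1; rewrite /mid; have := ltn_ord p; lia.
  + have : (2 * p + 2)%:R <= n%:R :> R by rewrite ler_nat.
    by rewrite natrD natrM => h; rewrite ler0_norm; lra.
  + have : n%:R <= (2 * p)%:R :> R by rewrite ler_nat.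
    by rewrite natrM => h; rewrite ger0_norm; lra.
Qed.

Let W_mid p q : (p : nat) = mid n -> (q : nat) = (mid n).+1 ->
  W p q = hdev a (1 + lam_eps R n) /\ W q p = - hdev a (1 + lam_eps R n).
Proof.
move=> ep eq; have pq : p != q by rewrite -val_eqE /= ep eq (ltn_eqF (ltnSn _)).
have e0 : 0 < lam_eps R n by rewrite invr_gt0; have := N_ge2; lra.
rewrite W_hdev // W_hdev 1?eq_sym //.
have -> : lam p / lam q = (lam q / lam p)^-1 by rewrite invf_div.
rewrite (lamseq_ratio_mid R n_ge2 ep eq).
split => //; rewrite hdevV ?gt_eqF //; first by lra.
by have : 1 < (1 + lam_eps R n) ^+ 2 by nra.
Qed.

Let row_form_lt0_pair p q0 : p != q0 -> lam_rank n p = mid n -> lam_rank n q0 = mid n ->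
  `|W p q0| = hdev a (1 + lam_eps R n) -> row_form a (W p) < 0.
Proof.
move=> pq0 rp rq0 Wq0.
apply: (row_form_lt0_peak N_ge2 a_ge _ Wq0 (hdev_lam_eps n_ge2 a_lt0)) => q qq0.
have [<-|qp] := eqVneq p q; first by rewrite W_diag normr0.
apply: W_le3; rewrite rp; apply: contra_neq qp => rq; apply: val_inj.
move: rp rq0 rq pq0 qq0; rewrite /lam_rank -!val_eqE /=.
by case: ifP; case: ifP; case: ifP; lia.
Qed.

Lemma row_form_Hmx_lt0 p : row_form a (W p) < 0.
Proof.
have mlt := mid_succ_lt n_ge2; have mlt' := ltnW mlt.
have M_ge0 : 0 <= hdev a (1 + lam_eps R n).
  by rewrite (le_trans _ (hdev_lam_eps n_ge2 a_lt0)) // mulr_ge0 ?ler0n.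
have [pm|pm] := eqVneq (p : nat) (mid n).
  have [W1 _] := W_mid pm (erefl : (Ordinal mlt : nat) = (mid n).+1).
  apply: (row_form_lt0_pair (q0 := Ordinal mlt)).
  - by rewrite -val_eqE /= pm (ltn_eqF (ltnSn _)).
  - by rewrite /lam_rank pm leqnn.
  - by rewrite /lam_rank ltnn.
  - by rewrite W1 ger0_norm.
have [pm1|pm1] := eqVneq (p : nat) (mid n).+1; last exact: row_form_lt0_off_mid.
have [_ W2] := W_mid (erefl : (Ordinal mlt' : nat) = mid n) pm1.
apply: (row_form_lt0_pair (q0 := Ordinal mlt')).
- by rewrite -val_eqE /= pm1 (gtn_eqF (ltnSn _)).
- by rewrite /lam_rank pm1 ltnn.
- by rewrite /lam_rank leqnn.
- by rewrite W2 normrN ger0_norm.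
Qed.

End WitnessRows.

Theorem mainTheorem4 (R : realType) (n : nat) (hn : (2 <= n)%N) :
  exists (lam : 'I_n -> R) (G : 'M[R]_n), in_Theta lam G.
Proof.
have N_ge2 : 2 <= n%:R :> R by rewrite (ler_nat R 2 n).
pose a := corr (n%:R : R).
have a_lt0 : a < 0 := corr_lt0 N_ge2.
have a_minor := corr_minor N_ge2; have a_det := corr_det N_ge2.
exists (lamseq R (n := n)), (equicorr_mx n a).
split; first by move=> p; apply/lt0r_neq0/lamseq_gt0.
split; first by move=> p q /(lamseq_separated R hn).
split; first exact: equicorr_mx_tr.
split; first by move=> p; rewrite mxE eqxx.
split.
  split; first exact: equicorr_nondegenerate.
  split; first exact: equicorr_indefinite.
  split; first exact: equicorr_neg_inertia.
  by move=> S /andP[_ Sn]; apply: equicorr_principal_minor_gt0.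
have a_neq1 : a != 1 by rewrite lt_eqF // (lt_trans a_lt0).
move=> p; rewrite (quad_invmx_equicorr_row a_neq1 (corr_fix N_ge2) (p := p)) ?mxE ?eqxx //.
rewrite pmulr_rlt0 ?invr_gt0 ?subr_gt0 ?(lt_trans a_lt0) //.
exact: (row_form_Hmx_lt0 hn (corr_ge N_ge2) (corr_mulN N_ge2)).
Qed.
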